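(* Let $X,Y$ be Scott domains quantified, respectively, by partial metrics $p_X,p_Y$ with values in $[0,1]$, and let $(a_n)_{n\geq1}$ be an enumeration of a countable basis of $X$. Then for every $0<\theta\leq\frac12$, the domain $X\Rightarrow Y$ of Scott-continuous functions from $X$ to $Y$ (ordered pointwise) is quantified by the partial metric $$p^\theta_{X\Rightarrow Y}(f,g)=\sum_{n=1}^\infty\theta^n\,p_Y\big(f(a_n),g(a_n)\big).$$
   Context: A partial metric (PM) on $X$ is $p:X\times X\to[0,+\infty]$ with $p(x,x)\leq p(x,y)$; $p(x,x)=p(x,y)=p(y,y)\Rightarrow x=y$; $p(x,y)=p(y,x)$; $p(x,y)\leq p(x,z)+p(z,y)-p(z,z)$. Open balls $B^p_\epsilon(x)=\{y\mid p(y,x)<p(x,x)+\epsilon\}$; $\mathcal O_p(X)$ is the topology of unions of open balls. In a dcpo, $x\ll y$ iff every directed $\Delta$ with $y\leq\bigvee\Delta$ contains some $d\geq x$; a basis is $B\subseteq X$ with $\{b\in B\mid b\ll x\}$ directed with join $x$ for each $x$; $x$ is compact if $x\ll x$. A Scott domain is a dcpo with a countable basis of compact elements which is bounded complete (every finite subset with an upper bound has a join). Scott-continuous functions are monotone maps preserving joins of directed sets. The Scott topology $\mathcal O_\sigma(X)$ consists of upper sets $U$ with $x\in U\Rightarrow\exists y\ll x,\ y\in U$. A dcpo $X$ is quantified by $p$ if $\mathcal O_\sigma(X)=\mathcal O_p(X)$. *)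

From Stdlib Require Import Reals List.
From Coquelicot Require Import Coquelicot.
Open Scope R_scope.
Set Implicit Arguments.

Section Order.
Variable X : Type.
Variable le : X -> X -> Prop.

Definition is_partial_order : Prop :=
  (forall x, le x x) /\ (forall x y, le x y -> le y x -> x = y) /\
  (forall x y z, le x y -> le y z -> le x z).

Definition directed (D : X -> Prop) : Prop :=
  (exists d, D d) /\
  (forall x y, D x -> D y -> exists z, D z /\ le x z /\ le y z).

Definition is_lub (S : X -> Prop) (s : X) : Prop :=
  (forall x, S x -> le x s) /\ (forall u, (forall x, S x -> le x u) -> le s u).

Definition dcpo : Prop :=
  is_partial_order /\ forall D, directed D -> exists s, is_lub D s.

Definition way_below (x y : X) : Prop :=
  forall D s, directed D -> is_lub D s -> le y s -> exists d, D d /\ le x d.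

Definition compact (x : X) : Prop := way_below x x.

Definition is_basis (B : X -> Prop) : Prop :=
  forall x, directed (fun b => B b /\ way_below b x) /\
            is_lub (fun b => B b /\ way_below b x) x.

Definition countable_set (B : X -> Prop) : Prop :=
  exists f : X -> nat, forall x y, B x -> B y -> f x = f y -> x = y.

Definition bounded_complete : Prop :=
  forall l : list X, (exists u, forall x, In x l -> le x u) ->
    exists j, is_lub (fun x => In x l) j.

Definition scott_domain : Prop :=
  dcpo /\
  (exists B, countable_set B /\ (forall b, B b -> compact b) /\ is_basis B) /\
  bounded_complete.

Definition scott_open (U : X -> Prop) : Prop :=
  (forall x y, U x -> le x y -> U y) /\
  (forall x, U x -> exists y, way_below y x /\ U y).
End Order.

Section PMetric.
Variable X : Type.
Variable p : X -> X -> R.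

Definition is_partial_metric : Prop :=
  (forall x y, 0 <= p x y) /\
  (forall x y, p x x <= p x y) /\
  (forall x y, p x x = p x y -> p x y = p y y -> x = y) /\
  (forall x y, p x y = p y x) /\
  (forall x y z, p x y <= p x z + p z y - p z z).

Definition pball (x : X) (eps : R) (y : X) : Prop := p y x < p x x + eps.

Definition pm_open (U : X -> Prop) : Prop :=
  exists I : X * R -> Prop,
    (forall c, I c -> 0 < snd c) /\
    (forall y, U y <-> exists c, I c /\ pball (fst c) (snd c) y).
End PMetric.

Definition quantified (X : Type) (le : X -> X -> Prop) (p : X -> X -> R) : Prop :=
  is_partial_metric p /\ (forall U, scott_open le U <-> pm_open p U).

Definition scott_continuous (X Y : Type) (leX : X -> X -> Prop)
  (leY : Y -> Y -> Prop) (f : X -> Y) : Prop :=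
  (forall x y, leX x y -> leY (f x) (f y)) /\
  (forall D s, directed leX D -> is_lub leX D s ->
     is_lub leY (fun y => exists d, D d /\ f d = y) (f s)).

Definition cfun (X Y : Type) (leX : X -> X -> Prop) (leY : Y -> Y -> Prop) :=
  { f : X -> Y | scott_continuous leX leY f }.

Definition cfun_le (X Y : Type) (leX : X -> X -> Prop) (leY : Y -> Y -> Prop)
  (f g : cfun leX leY) : Prop :=
  forall x, leY (proj1_sig f x) (proj1_sig g x).

(* p^theta(f,g) = sum_{n>=1} theta^n pY(f(a_n), g(a_n)); here a is indexed from 0,
   a n standing for a_{n+1} *)
Definition p_theta (X Y : Type) (leX : X -> X -> Prop) (leY : Y -> Y -> Prop)
  (pY : Y -> Y -> R) (a : nat -> X) (theta : R) (f g : cfun leX leY) : R :=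
  Series (fun n => theta ^ (S n) * pY (proj1_sig f (a n)) (proj1_sig g (a n))).

(* [p_theta f g] weighs the distance at [a_n] by [theta^(n+1)], so a small
   [p_theta]-ball around [f] controls finitely many values [g a_n] to any
   precision, while the tail beyond [N] weighs at most [theta^N / (1 - theta)].
   A Scott-open set containing [f] contains a step function below [f], built
   from finitely many compact pairs [c <= f b]; each condition [c <= g b] is
   forced by a small ball, as the upper set of a compact [c] is Scott-open,
   hence [pY]-open.  Conversely, balls are upper sets because [pY] is
   antitone, and a point [g] of a ball is approximated from way below by a step
   function close to [g] on [a_0, ..., a_(N-1)], the tail being negligible. *)

From Stdlib Require Import Reals Lra Lia List Classical ClassicalEpsilon
  FunctionalExtensionality PropExtensionality ProofIrrelevance.
From Coquelicot Require Import Coquelicot.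
Open Scope R_scope.
Set Implicit Arguments.
Unset Strict Implicit.

Definition image {A B : Type} (f : A -> B) (D : A -> Prop) (y : B) : Prop :=
  exists d, D d /\ f d = y.

Lemma is_lub_ext (T : Type) (le : T -> T -> Prop) (S S' : T -> Prop) x :
  (forall y, S y <-> S' y) -> is_lub le S x -> is_lub le S' x.
Proof.
  intros HS [Hub Hleast]. split.
  - intros y Hy. apply Hub, HS, Hy.
  - intros u Hu. apply Hleast. intros y Hy. apply Hu, HS, Hy.
Qed.

Lemma image_directed (A B : Type) (leA : A -> A -> Prop) (leB : B -> B -> Prop)
  (f : A -> B) D :
  (forall x y, leA x y -> leB (f x) (f y)) -> directed leA D -> directed leB (image f D).
Proof.
  intros Hf [[d Hd] Hdir]. split.
  - exists (f d), d. auto.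
  - intros x y [dx [Hx <-]] [dy [Hy <-]].
    destruct (Hdir _ _ Hx Hy) as [z [Hz [Hxz Hyz]]].
    exists (f z). split; [exists z; auto | auto].
Qed.

Section PartialOrder.
Variable T : Type.
Variable le : T -> T -> Prop.
Hypothesis Hpo : is_partial_order le.

Lemma po_refl x : le x x. Proof. apply Hpo. Qed.
Lemma po_antisym x y : le x y -> le y x -> x = y. Proof. apply Hpo. Qed.
Lemma po_trans x y z : le x y -> le y z -> le x z. Proof. apply Hpo. Qed.

Lemma singleton_directed y : directed le (eq y).
Proof.
  split; [exists y; reflexivity |].
  intros x z <- <-. exists y. auto using po_refl.
Qed.

Lemma singleton_lub y : is_lub le (eq y) y.
Proof. split; [intros x <-; apply po_refl | intros u Hu; apply Hu; reflexivity]. Qed.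

Lemma way_below_le x y : way_below le x y -> le x y.
Proof.
  intros Hxy.
  destruct (Hxy _ _ (singleton_directed y) (singleton_lub y) (po_refl y)) as [d [<- Hd]].
  exact Hd.
Qed.

Lemma compact_way_below c y : compact le c -> le c y -> way_below le c y.
Proof.
  intros Hc Hcy D s HD Hs Hys. apply (Hc D s HD Hs). eapply po_trans; eauto.
Qed.

Lemma is_lub_unique S x y : is_lub le S x -> is_lub le S y -> x = y.
Proof.
  intros [Hx Hx'] [Hy Hy']. apply po_antisym; [apply Hx' | apply Hy']; assumption.
Qed.

Lemma compact_in_basis B b : is_basis le B -> compact le b -> B b.
Proof.
  intros HB Hb. destruct (HB b) as [Hdir Hlub].
  destruct (Hb _ _ Hdir Hlub (po_refl b)) as [d [[HBd Hdb] Hbd]].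
  rewrite (po_antisym Hbd (way_below_le Hdb)). exact HBd.
Qed.

Lemma compact_basis_eq B :
  (forall b, B b -> compact le b) -> is_basis le B -> B = compact le.
Proof.
  intros Hc HB. extensionality b. apply propositional_extensionality.
  split; [apply Hc | apply compact_in_basis, HB].
Qed.

Lemma scott_open_meets_directed U D s :
  scott_open le U -> directed le D -> is_lub le D s -> U s -> exists d, D d /\ U d.
Proof.
  intros [Hup Happrox] HD Hs HUs. destruct (Happrox s HUs) as [y [Hys HUy]].
  destruct (Hys D s HD Hs (po_refl s)) as [d [Hd Hyd]].
  exists d. split; [exact Hd | exact (Hup _ _ HUy Hyd)].
Qed.

Lemma scott_open_up_compact c : compact le c -> scott_open le (le c).
Proof.
  intros Hc. split.
  - intros x y. apply po_trans.
  - intros x Hcx. exists c. split; [exact (compact_way_below Hc Hcx) | apply po_refl].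
Qed.
End PartialOrder.

Section PartialMetric.
Variable T : Type.
Variable p : T -> T -> R.
Hypothesis Hp : is_partial_metric p.

Lemma pm_nonneg x y : 0 <= p x y. Proof. apply Hp. Qed.
Lemma pm_self_le x y : p x x <= p x y. Proof. apply Hp. Qed.
Lemma pm_sep x y : p x x = p x y -> p x y = p y y -> x = y. Proof. apply Hp. Qed.
Lemma pm_sym x y : p x y = p y x. Proof. apply Hp. Qed.
Lemma pm_triangle x y z : p x y <= p x z + p z y - p z z. Proof. apply Hp. Qed.

Lemma pm_open_nbhd U y : pm_open p U -> U y ->
  exists d, 0 < d /\ forall y', p y' y < p y y + d -> U y'.
Proof.
  intros [I [_ HU]] Hy. destruct (proj1 (HU y) Hy) as [[z r] [Hzr Hball]].
  unfold pball in Hball; simpl in Hball.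
  exists (p z z + r - p y z). split; [lra |].
  intros y' Hy'. apply HU. exists (z, r). split; [exact Hzr |].
  unfold pball; simpl. pose proof (pm_triangle y' z y). lra.
Qed.

Lemma pm_open_of_nbhd U :
  (forall y, U y -> exists d, 0 < d /\ forall y', p y' y < p y y + d -> U y') ->
  pm_open p U.
Proof.
  intros HU. exists (fun c => 0 < snd c /\ forall y', pball p (fst c) (snd c) y' -> U y').
  split; [intros c [Hc _]; exact Hc |].
  intros y. split.
  - intros Hy. destruct (HU y Hy) as [d [Hd Hball]].
    exists (y, d). simpl. unfold pball. repeat split; auto. lra.
  - intros [c [[_ Hc] Hball]]. exact (Hc y Hball).
Qed.

Lemma pm_open_ball z r : pm_open p (fun y => p y z < r).
Proof.
  apply pm_open_of_nbhd. intros y Hy. exists (r - p y z). split; [lra |].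
  intros y' Hy'. pose proof (pm_triangle y' z y). lra.
Qed.
End PartialMetric.

Lemma quantified_antitone (T : Type) (le : T -> T -> Prop) (p : T -> T -> R) :
  quantified le p -> forall y y' z, le y y' -> p y' z <= p y z.
Proof.
  intros [Hp Hq] y y' z Hyy'.
  assert (Hy : p y' y <= p y y).
  { destruct (Rle_or_lt (p y' y) (p y y)) as [Hle | Hlt]; [exact Hle |].
    destruct (proj2 (Hq _) (pm_open_ball Hp y (p y' y))) as [Hup _].
    specialize (Hup y y' Hlt Hyy'). lra. }
  pose proof (pm_triangle Hp y' z y). pose proof (pm_sym Hp y z). lra.
Qed.

Lemma Series_ge0 a : (forall n, 0 <= a n) -> ex_series a -> 0 <= Series a.
Proof.
  intros Ha Hex.
  replace 0 with (Series (fun n => 0 * a n)) by (rewrite Series_scal_l; ring).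
  apply Series_le; [intros n; rewrite Rmult_0_l; split; [lra | apply Ha] | exact Hex].
Qed.

Lemma ex_series_Rext (a b : nat -> R) : (forall n, a n = b n) -> ex_series a -> ex_series b.
Proof. apply ex_series_ext. Qed.

Lemma ex_series_Rminus a b : ex_series a -> ex_series b -> ex_series (fun n => a n - b n).
Proof. intros Ha Hb. exact (ex_series_minus _ _ Ha Hb). Qed.

Lemma ex_series_Rplus a b : ex_series a -> ex_series b -> ex_series (fun n => a n + b n).
Proof. intros Ha Hb. exact (ex_series_plus _ _ Ha Hb). Qed.

Lemma Series_monotone a b :
  ex_series a -> ex_series b -> (forall n, a n <= b n) -> Series a <= Series b.
Proof.
  intros Ha Hb Hab.
  assert (H : 0 <= Series (fun n => b n - a n)).
  { apply Series_ge0; [intros n; specialize (Hab n); lra | exact (ex_series_Rminus Hb Ha)]. }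
  rewrite Series_minus in H by assumption. lra.
Qed.

Lemma Series_ge_term a n : (forall k, 0 <= a k) -> ex_series a -> a n <= Series a.
Proof.
  intros Ha Hex. rewrite (Series_incr_n a (S n)) by (lia || exact Hex). simpl pred.
  assert (Htail : 0 <= Series (fun k => a (S n + k)%nat)).
  { apply Series_ge0; [intros k; apply Ha | exact (proj1 (ex_series_incr_n a (S n)) Hex)]. }
  assert (Hhead : a n <= sum_f_R0 a n).
  { destruct n as [|n]; simpl; [lra |].
    pose proof (cond_pos_sum a n Ha). lra. }
  lra.
Qed.

Section GeometricWeights.
Variable theta : R.
Hypothesis theta_bounds : 0 < theta < 1.

Definition wsum (u : nat -> R) : R := Series (fun n => theta ^ S n * u n).
Definition wsummable (u : nat -> R) : Prop := ex_series (fun n => theta ^ S n * u n).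

Lemma theta_pow_pos n : 0 < theta ^ n.
Proof. apply pow_lt; lra. Qed.

Lemma ex_series_theta_pow : ex_series (fun n => theta ^ S n).
Proof.
  apply (ex_series_scal_l theta (fun n => theta ^ n)).
  apply ex_series_geom. rewrite Rabs_right; lra.
Qed.

Lemma Series_theta_pow : Series (fun n => theta ^ S n) = theta / (1 - theta).
Proof.
  rewrite (Series_ext _ (fun n => theta * theta ^ n)) by reflexivity.
  rewrite Series_scal_l, Series_geom by (rewrite Rabs_right; lra).
  field. lra.
Qed.

Lemma wsummable_bounded u K : (forall n, Rabs (u n) <= K) -> wsummable u.
Proof.
  intros Hu. apply (@ex_series_le R_AbsRing R_CompleteNormedModule _ (fun n => K * theta ^ S n)).
  - intros n. change (Rabs (theta ^ S n * u n) <= K * theta ^ S n).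
    rewrite Rabs_mult, (Rabs_right (theta ^ S n)) by (left; apply theta_pow_pos).
    rewrite Rmult_comm. apply Rmult_le_compat_r; [left; apply theta_pow_pos | apply Hu].
  - exact (ex_series_scal_l K _ ex_series_theta_pow).
Qed.

Lemma wsummable_plus u v : wsummable u -> wsummable v -> wsummable (fun n => u n + v n).
Proof.
  intros Hu Hv. apply (@ex_series_Rext (fun n => theta ^ S n * u n + theta ^ S n * v n)).
  - intros n. ring.
  - exact (ex_series_Rplus Hu Hv).
Qed.

Lemma wsummable_minus u v : wsummable u -> wsummable v -> wsummable (fun n => u n - v n).
Proof.
  intros Hu Hv. apply (@ex_series_Rext (fun n => theta ^ S n * u n - theta ^ S n * v n)).
  - intros n. ring.
  - exact (ex_series_Rminus Hu Hv).
Qed.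

Lemma wsum_plus u v :
  wsummable u -> wsummable v -> wsum (fun n => u n + v n) = wsum u + wsum v.
Proof.
  intros Hu Hv. unfold wsum. rewrite <- Series_plus by assumption.
  apply Series_ext. intros n. ring.
Qed.

Lemma wsum_minus u v :
  wsummable u -> wsummable v -> wsum (fun n => u n - v n) = wsum u - wsum v.
Proof.
  intros Hu Hv. unfold wsum. rewrite <- Series_minus by assumption.
  apply Series_ext. intros n. ring.
Qed.

Lemma wsum_le u v :
  wsummable u -> wsummable v -> (forall n, u n <= v n) -> wsum u <= wsum v.
Proof.
  intros Hu Hv Huv. apply Series_monotone; [exact Hu | exact Hv |].
  intros n. apply Rmult_le_compat_l; [left; apply theta_pow_pos | apply Huv].
Qed.

Lemma wsum_ge0 u : wsummable u -> (forall n, 0 <= u n) -> 0 <= wsum u.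
Proof.
  intros Hu Hpos. apply Series_ge0; [| exact Hu].
  intros n. apply Rmult_le_pos; [left; apply theta_pow_pos | apply Hpos].
Qed.

Lemma wsum_ge_term u n : wsummable u -> (forall k, 0 <= u k) -> theta ^ S n * u n <= wsum u.
Proof.
  intros Hu Hpos. apply (@Series_ge_term (fun k => theta ^ S k * u k)); [| exact Hu].
  intros k. apply Rmult_le_pos; [left; apply theta_pow_pos | apply Hpos].
Qed.

Lemma wsum_const c : wsum (fun _ => c) = c * (theta / (1 - theta)).
Proof.
  unfold wsum. rewrite (Series_ext _ (fun n => c * theta ^ S n)) by (intros; ring).
  rewrite Series_scal_l, Series_theta_pow. reflexivity.
Qed.

Definition tail_indicator (N n : nat) : R := if (n <? N)%nat then 0 else 1.

Lemma wsum_tail_indicator N : wsum (tail_indicator N) = theta ^ N * (theta / (1 - theta)).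
Proof.
  unfold wsum. rewrite (Series_incr_n_aux _ N).
  - rewrite (Series_ext _ (fun k => theta ^ N * theta ^ S k)).
    + rewrite Series_scal_l, Series_theta_pow. reflexivity.
    + intros k. unfold tail_indicator.
      replace (N + k <? N)%nat with false by (symmetry; apply Nat.ltb_ge; lia).
      rewrite <- pow_add. replace (S (N + k)) with (N + S k)%nat by lia. ring.
  - intros k Hk. unfold tail_indicator.
    replace (k <? N)%nat with true by (symmetry; apply Nat.ltb_lt; exact Hk). ring.
Qed.

Lemma wsum_le_head_tail u eps N :
  wsummable u -> 0 <= eps -> (forall n, u n <= 1) -> (forall n, (n < N)%nat -> u n <= eps) ->
  wsum u <= (eps + theta ^ N) * (theta / (1 - theta)).
Proof.
  intros Hu Heps Hle1 Hhead.
  assert (Hsum : wsummable (fun n => eps + tail_indicator N n)).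
  { apply wsummable_bounded with (K := eps + 1). intros n. unfold tail_indicator.
    destruct (n <? N)%nat; rewrite Rabs_right; lra. }
  apply Rle_trans with (wsum (fun n => eps + tail_indicator N n)).
  - apply wsum_le; [exact Hu | exact Hsum |].
    intros n. unfold tail_indicator. destruct (Nat.ltb_spec n N) as [Hn | Hn].
    + specialize (Hhead n Hn). lra.
    + specialize (Hle1 n). lra.
  - rewrite wsum_plus, wsum_const, wsum_tail_indicator.
    + lra.
    + apply wsummable_bounded with (K := Rabs eps). intros n. lra.
    + apply wsummable_bounded with (K := 1). intros n. unfold tail_indicator.
      destruct (n <? N)%nat; rewrite Rabs_right; lra.
Qed.
End GeometricWeights.

Section FunctionSpace.
Variables X Y : Type.
Variable leX : X -> X -> Prop.
Variable leY : Y -> Y -> Prop.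
Hypothesis poX : is_partial_order leX.
Hypothesis poY : is_partial_order leY.
Hypothesis dcpoY : forall D, directed leY D -> exists s, is_lub leY D s.
Hypothesis bcY : bounded_complete leY.

Local Notation F := (cfun leX leY).
Local Notation cle := (@cfun_le X Y leX leY).
Local Notation fv f := (proj1_sig f).

Lemma cfun_monotone (f : F) x y : leX x y -> leY (fv f x) (fv f y).
Proof. apply (proj1 (proj2_sig f)). Qed.

Lemma cfun_lub (f : F) D s :
  directed leX D -> is_lub leX D s -> is_lub leY (image (fv f) D) (fv f s).
Proof. apply (proj2 (proj2_sig f)). Qed.

Lemma cfun_ext (f g : F) : (forall x, fv f x = fv g x) -> f = g.
Proof.
  destruct f as [f Hf], g as [g Hg]; simpl. intros Hfg.
  assert (f = g) as <- by (extensionality x; apply Hfg).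
  f_equal. apply proof_irrelevance.
Qed.

Lemma cfun_le_partial_order : is_partial_order cle.
Proof.
  split; [| split].
  - intros f x. apply (po_refl poY).
  - intros f g Hfg Hgf. apply cfun_ext. intros x. exact (po_antisym poY (Hfg x) (Hgf x)).
  - intros f g h Hfg Hgh x. exact (po_trans poY (Hfg x) (Hgh x)).
Qed.

(* The last two hypotheses express monotonicity and continuity of
   [x |-> \/ S x] without referring to the joins themselves. *)
Lemma exists_cfun_of_lubs (S : X -> Y -> Prop) :
  (forall x, exists j, is_lub leY (S x) j) ->
  (forall x x' y u, leX x x' -> S x y -> (forall y', S x' y' -> leY y' u) -> leY y u) ->
  (forall D s y u, directed leX D -> is_lub leX D s -> S s y ->
     (forall d y', D d -> S d y' -> leY y' u) -> leY y u) ->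
  exists h : F, forall x, is_lub leY (S x) (fv h x).
Proof.
  intros Hex Hmono Hcont. destruct (choice _ Hex) as [h Hh].
  assert (Hhmono : forall x x', leX x x' -> leY (h x) (h x')).
  { intros x x' Hxx'. apply (Hh x). intros y Hy.
    apply (Hmono x x' y (h x') Hxx' Hy). apply (Hh x'). }
  assert (Hhcont : scott_continuous leX leY h).
  { split; [exact Hhmono |]. intros D s HD Hs. split.
    - intros y [d [Hd <-]]. apply Hhmono, Hs, Hd.
    - intros u Hu. apply (Hh s). intros y Hy.
      apply (Hcont D s y u HD Hs Hy). intros d y' Hd Hy'.
      apply (po_trans poY (y := h d)); [apply (Hh d), Hy' | apply Hu; exists d; auto]. }
  exists (exist _ h Hhcont). exact Hh.
Qed.

Lemma cfun_directed_lub D :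
  directed cle D -> exists t : F, forall x, is_lub leY (image (fun d => fv d x) D) (fv t x).
Proof.
  intros HD. apply exists_cfun_of_lubs.
  - intros x. apply dcpoY, (image_directed (fun f g (Hfg : cle f g) => Hfg x) HD).
  - intros x x' y u Hxx' [d [Hd <-]] Hu.
    apply (po_trans poY (cfun_monotone d Hxx')). apply Hu. exists d; auto.
  - intros S s y u HS Hs [d [Hd <-]] Hu.
    apply (cfun_lub d HS Hs). intros z [e [He <-]]. apply (Hu e). exact He. exists d; auto.
Qed.

Lemma cfun_lub_pointwise D s :
  directed cle D -> is_lub cle D s ->
  forall x, is_lub leY (image (fun d => fv d x) D) (fv s x).
Proof.
  intros HD Hs x. destruct (cfun_directed_lub HD) as [t Ht]. split.
  - intros y [d [Hd <-]]. apply Hs, Hd.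
  - intros u Hu. apply (po_trans poY (y := fv t x)); [| apply (Ht x), Hu].
    apply Hs. intros d Hd z. apply (Ht z). exists d; auto.
Qed.

Definition step_le (l : list (X * Y)) (x : X) (y : Y) : Prop :=
  exists b, In (b, y) l /\ leX b x.

Definition approx_list (f : F) (l : list (X * Y)) : Prop :=
  forall b c, In (b, c) l -> compact leX b /\ compact leY c /\ leY c (fv f b).

Definition step_fun (l : list (X * Y)) (h : F) : Prop :=
  forall x, is_lub leY (step_le l x) (fv h x).

Lemma step_le_finite l x : exists l', forall y, In y l' <-> step_le l x y.
Proof.
  induction l as [| [b c] l [l' Hl']].
  - exists nil. intros y. split; [intros [] | intros [b [[] _]]].
  - destruct (classic (leX b x)) as [Hbx | Hbx]; [exists (c :: l') | exists l'];
      intros y; split.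
    + intros [<- | Hy]; [exists b; simpl; auto |].
      destruct (proj1 (Hl' y) Hy) as [b' [Hin Hb']]. exists b'. simpl. auto.
    + intros [b' [[Heq | Hin] Hb']]; [injection Heq as -> ->; left; reflexivity |].
      right. apply Hl'. exists b'. auto.
    + intros Hy. destruct (proj1 (Hl' y) Hy) as [b' [Hin Hb']]. exists b'. simpl. auto.
    + intros [b' [[Heq | Hin] Hb']]; [injection Heq as -> ->; contradiction |].
      apply Hl'. exists b'. auto.
Qed.

Lemma exists_step_fun f l : approx_list f l -> exists h, step_fun l h.
Proof.
  intros Hl. apply exists_cfun_of_lubs.
  - intros x. destruct (step_le_finite l x) as [l' Hl'].
    destruct (bcY (l := l')) as [j Hj].
    + exists (fv f x). intros y Hy. destruct (proj1 (Hl' y) Hy) as [b [Hin Hbx]].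
      apply (po_trans poY (y := fv f b)); [apply (Hl b y Hin) | apply cfun_monotone, Hbx].
    + exists j. exact (is_lub_ext Hl' Hj).
  - intros x x' y u Hxx' [b [Hin Hbx]] Hu. apply Hu. exists b. split; [exact Hin |].
    exact (po_trans poX Hbx Hxx').
  - intros D s y u HD Hs [b [Hin Hbs]] Hu.
    destruct (proj1 (Hl b y Hin) D s HD Hs Hbs) as [d [Hd Hbd]].
    apply (Hu d); [exact Hd | exists b; auto].
Qed.

Lemma step_fun_ge l h b c x : step_fun l h -> In (b, c) l -> leX b x -> leY c (fv h x).
Proof. intros Hh Hin Hbx. apply (Hh x). exists b. auto. Qed.

Lemma step_fun_le l h g :
  step_fun l h -> (forall b c, In (b, c) l -> leY c (fv g b)) -> cle h g.
Proof.
  intros Hh Hg x. apply (Hh x). intros y [b [Hin Hbx]].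
  exact (po_trans poY (Hg b y Hin) (cfun_monotone g Hbx)).
Qed.

Lemma step_fun_way_below f l h : approx_list f l -> step_fun l h -> way_below cle h f.
Proof.
  intros Hl Hh D s HD Hs Hfs.
  assert (Hd : exists d, D d /\ forall b c, In (b, c) l -> leY c (fv d b)).
  { clear Hh. induction l as [| [b c] l IH].
    - destruct (proj1 HD) as [d Hd]. exists d. split; [exact Hd | intros b c []].
    - destruct IH as [d2 [Hd2 Hd2l]]; [intros b' c' Hin; apply Hl; right; exact Hin |].
      destruct (Hl b c (or_introl eq_refl)) as [_ [Hc Hcf]].
      destruct (Hc _ _ (image_directed (f := fun d => fv d b) (fun f g Hfg => Hfg b) HD)
                  (cfun_lub_pointwise HD Hs b) (po_trans poY Hcf (Hfs b)))
        as [y [[d1 [Hd1 <-]] Hcd1]].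
      destruct (proj2 HD _ _ Hd1 Hd2) as [d3 [Hd3 [H13 H23]]].
      exists d3. split; [exact Hd3 |]. intros b' c' [Heq | Hin].
      + injection Heq as <- <-. exact (po_trans poY Hcd1 (H13 b)).
      + exact (po_trans poY (Hd2l b' c' Hin) (H23 b')). }
  destruct Hd as [d [Hd Hdl]]. exists d. split; [exact Hd |].
  exact (step_fun_le Hh Hdl).
Qed.

Definition approximant (f h : F) : Prop := exists l, approx_list f l /\ step_fun l h.

Lemma approximants_directed f : directed cle (approximant f).
Proof.
  split.
  - assert (Hnil : approx_list f nil) by (intros b c []).
    destruct (exists_step_fun Hnil) as [h Hh]. exists h, nil. auto.
  - intros h1 h2 [l1 [Hl1 Hh1]] [l2 [Hl2 Hh2]].
    assert (Hl : approx_list f (l1 ++ l2)).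
    { intros b c Hin. apply in_app_or in Hin as [Hin | Hin]; auto. }
    destruct (exists_step_fun Hl) as [h Hh].
    exists h. split; [exists (l1 ++ l2); auto |].
    split; [apply (step_fun_le Hh1) | apply (step_fun_le Hh2)];
      intros b c Hin; apply (step_fun_ge Hh (b := b));
      solve [apply in_or_app; auto | apply (po_refl poX)].
Qed.

Hypothesis algX : is_basis leX (compact leX).
Hypothesis algY : is_basis leY (compact leY).

Lemma approximants_lub f : is_lub cle (approximant f) f.
Proof.
  split.
  - intros h [l [Hl Hh]]. apply (step_fun_le Hh). intros b c Hin. apply (Hl b c Hin).
  - intros u Hu x. destruct (algX x) as [HDx HLx].
    apply (cfun_lub f HDx HLx). intros y [b [[Hb Hbx] <-]].
    destruct (algY (fv f b)) as [HDb HLb]. apply HLb. intros c [Hc Hcb].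
    assert (Hl : approx_list f ((b, c) :: nil)).
    { intros b' c' [Heq | []]. injection Heq as <- <-.
      exact (conj Hb (conj Hc (way_below_le poY Hcb))). }
    destruct (exists_step_fun Hl) as [h Hh].
    apply (po_trans poY (y := fv h x)).
    + apply (step_fun_ge Hh (b := b)); [left; reflexivity | exact (way_below_le poX Hbx)].
    + apply Hu. exists ((b, c) :: nil). auto.
Qed.

Lemma cfun_eq_of_compacts (f g : F) : (forall b, compact leX b -> fv f b = fv g b) -> f = g.
Proof.
  intros Hfg. apply cfun_ext. intros x. destruct (algX x) as [HD HL].
  apply (is_lub_unique poY (cfun_lub f HD HL)).
  refine (is_lub_ext _ (cfun_lub g HD HL)).
  intros y. split; intros [b [[Hb Hbx] <-]]; exists b; auto using eq_sym.
Qed.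

Lemma compact_pair_in_open (g : F) x O :
  scott_open leY O -> O (fv g x) ->
  exists b c, compact leX b /\ compact leY c /\ leY c (fv g b) /\ leX b x /\ O c.
Proof.
  intros HO Hgx. destruct (algX x) as [HDx HLx].
  destruct (scott_open_meets_directed poY HO (image_directed (cfun_monotone g) HDx)
              (cfun_lub g HDx HLx) Hgx) as [y [[b [[Hb Hbx] <-]] Hgb]].
  destruct (algY (fv g b)) as [HDb HLb].
  destruct (scott_open_meets_directed poY HO HDb HLb Hgb) as [c [[Hc Hcb] HOc]].
  exists b, c. repeat split; auto; [exact (way_below_le poY Hcb) | exact (way_below_le poX Hbx)].
Qed.

Lemma approx_list_meeting_opens (g : F) (x : nat -> X) (O : nat -> Y -> Prop) N :
  (forall n, scott_open leY (O n)) -> (forall n, O n (fv g (x n))) ->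
  exists l, approx_list g l /\
    forall n, (n < N)%nat -> exists b c, In (b, c) l /\ leX b (x n) /\ O n c.
Proof.
  intros HO Hg. induction N as [| N [l [Hl Hcover]]].
  - exists nil. split; [intros b c [] | intros n Hn; lia].
  - destruct (compact_pair_in_open (HO N) (Hg N)) as [b [c [Hb [Hc [Hcg [HbN HOc]]]]]].
    exists ((b, c) :: l). split.
    + intros b' c' [Heq | Hin]; [injection Heq as <- <-; auto | exact (Hl b' c' Hin)].
    + intros n Hn. destruct (Nat.eq_dec n N) as [-> | Hne].
      * exists b, c. simpl. auto.
      * destruct (Hcover n ltac:(lia)) as [b' [c' [Hin Hrest]]]. exists b', c'. simpl. auto.
Qed.
End FunctionSpace.

Section Quantification.
Variables X Y : Type.
Variable leX : X -> X -> Prop.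
Variable leY : Y -> Y -> Prop.
Hypothesis poX : is_partial_order leX.
Hypothesis poY : is_partial_order leY.
Hypothesis dcpoY : forall D, directed leY D -> exists s, is_lub leY D s.
Hypothesis bcY : bounded_complete leY.
Hypothesis algX : is_basis leX (compact leX).
Hypothesis algY : is_basis leY (compact leY).

Variable pY : Y -> Y -> R.
Hypothesis qY : quantified leY pY.
Hypothesis pY_le1 : forall y y', pY y y' <= 1.

Variable a : nat -> X.
Hypothesis a_onto_compacts : forall b, compact leX b -> exists n, a n = b.

Variable theta : R.
Hypothesis theta_bounds : 0 < theta < 1.

Local Notation F := (cfun leX leY).
Local Notation cle := (@cfun_le X Y leX leY).
Local Notation fv f := (proj1_sig f).
Local Notation P := (@p_theta X Y leX leY pY a theta).

Let pmY : is_partial_metric pY := proj1 qY.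

Definition pdist_at (f g : F) (n : nat) : R := pY (fv f (a n)) (fv g (a n)).

Lemma p_theta_wsum f g : P f g = wsum theta (pdist_at f g).
Proof. reflexivity. Qed.

Lemma wsummable_pdist_at f g : wsummable theta (pdist_at f g).
Proof.
  apply (wsummable_bounded theta_bounds) with (K := 1). intros n. unfold pdist_at.
  rewrite Rabs_right by (apply Rle_ge, (pm_nonneg pmY)). apply pY_le1.
Qed.

Lemma p_theta_antitone g g' f : cle g g' -> P g' f <= P g f.
Proof.
  intros Hgg'. rewrite !p_theta_wsum.
  apply (wsum_le theta_bounds); try apply wsummable_pdist_at.
  intros n. apply (quantified_antitone qY), Hgg'.
Qed.

Lemma pdist_at_nonneg f g n : 0 <= pdist_at f g n.
Proof. apply (pm_nonneg pmY). Qed.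

Lemma pdist_at_sym f g n : pdist_at f g n = pdist_at g f n.
Proof. apply (pm_sym pmY). Qed.

Lemma pdist_at_self_le f g n : pdist_at f f n <= pdist_at g f n.
Proof. rewrite (pdist_at_sym g f). apply (pm_self_le pmY). Qed.

Lemma p_theta_sym f g : P f g = P g f.
Proof. apply Series_ext. intros n. rewrite (pm_sym pmY). reflexivity. Qed.

Lemma p_theta_term_le f g n :
  theta ^ S n * (pdist_at g f n - pdist_at f f n) <= P g f - P f f.
Proof.
  rewrite !p_theta_wsum, <- wsum_minus by apply wsummable_pdist_at.
  apply (wsum_ge_term theta_bounds (u := fun k => pdist_at g f k - pdist_at f f k)).
  - apply wsummable_minus; apply wsummable_pdist_at.
  - intros k. pose proof (pdist_at_self_le f g k). lra.
Qed.

Lemma p_theta_self_eq f g : P f f = P g f -> forall n, pdist_at f f n = pdist_at g f n.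
Proof.
  intros Hfg n. pose proof (p_theta_term_le f g n) as Hterm.
  pose proof (theta_pow_pos theta_bounds (S n)).
  destruct (Rle_lt_or_eq_dec _ _ (pdist_at_self_le f g n)) as [Hlt | Heq]; [| exact Heq].
  assert (0 < theta ^ S n * (pdist_at g f n - pdist_at f f n)) by (apply Rmult_lt_0_compat; lra).
  lra.
Qed.

Lemma p_theta_partial_metric : is_partial_metric P.
Proof.
  split; [| split; [| split; [| split]]].
  - intros f g. apply (wsum_ge0 theta_bounds (wsummable_pdist_at f g)), pdist_at_nonneg.
  - intros f g. apply (wsum_le theta_bounds); try apply wsummable_pdist_at.
    intros n. apply (pm_self_le pmY).
  - intros f g Hff Hgg. apply (cfun_eq_of_compacts poY algX).
    intros b Hb. destruct (a_onto_compacts Hb) as [n <-].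
    apply (pm_sep pmY).
    + rewrite (pm_sym pmY (fv f (a n)) (fv g (a n))).
      exact (p_theta_self_eq (eq_trans Hff (p_theta_sym f g)) n).
    + symmetry. exact (p_theta_self_eq (eq_sym Hgg) n).
  - exact p_theta_sym.
  - intros f g h. rewrite !p_theta_wsum.
    rewrite <- wsum_plus, <- wsum_minus;
      try apply wsummable_plus; try apply wsummable_pdist_at.
    apply (wsum_le theta_bounds).
    + apply wsummable_pdist_at.
    + apply wsummable_minus; [apply wsummable_plus |];
        apply wsummable_pdist_at.
    + intros n. apply (pm_triangle pmY).
Qed.

Lemma p_theta_ball_forces_pair (f : F) b c :
  compact leX b -> compact leY c -> leY c (fv f b) ->
  exists e, 0 < e /\ forall g, P g f < P f f + e -> leY c (fv g b).
Proof.
  intros Hb Hc Hcf. destruct (a_onto_compacts Hb) as [n <-].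
  destruct (pm_open_nbhd pmY (proj1 (proj2 qY _) (scott_open_up_compact poY Hc)) Hcf)
    as [d [Hd Hball]].
  pose proof (theta_pow_pos theta_bounds (S n)) as Hw.
  exists (theta ^ S n * d). split; [apply Rmult_lt_0_compat; assumption |].
  intros g Hg. apply Hball.
  pose proof (p_theta_term_le f g n) as Hterm. unfold pdist_at in Hterm.
  assert (Hlt : theta ^ S n * (pY (fv g (a n)) (fv f (a n)) - pY (fv f (a n)) (fv f (a n)))
                < theta ^ S n * d) by lra.
  apply Rmult_lt_reg_l in Hlt; [lra | exact Hw].
Qed.

Lemma p_theta_ball_forces (f : F) l :
  approx_list f l ->
  exists e, 0 < e /\ forall g, P g f < P f f + e -> forall b c, In (b, c) l -> leY c (fv g b).
Proof.
  induction l as [| [b c] l IH]; intros Hl.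
  - exists 1. split; [lra | intros g _ b c []].
  - destruct IH as [e1 [He1 Hforce1]]; [intros b' c' Hin; apply Hl; right; exact Hin |].
    destruct (Hl b c (or_introl eq_refl)) as [Hb [Hc Hcf]].
    destruct (p_theta_ball_forces_pair Hb Hc Hcf) as [e2 [He2 Hforce2]].
    exists (Rmin e1 e2). split; [apply Rmin_glb_lt; assumption |].
    intros g Hg b' c' [Heq | Hin].
    + injection Heq as <- <-. apply Hforce2. pose proof (Rmin_r e1 e2). lra.
    + apply (Hforce1 g); [pose proof (Rmin_l e1 e2); lra | exact Hin].
Qed.

Lemma scott_open_p_theta_nbhd U (f : F) :
  scott_open cle U -> U f -> exists e, 0 < e /\ forall g, P g f < P f f + e -> U g.
Proof.
  intros [Hup Happrox] Hf. destruct (Happrox f Hf) as [k [Hkf HUk]].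
  destruct (Hkf _ _ (approximants_directed poX poY bcY f) (approximants_lub poX poY bcY algX algY f)
              (po_refl (cfun_le_partial_order leX poY) f)) as [h [[l [Hl Hh]] Hkh]].
  destruct (p_theta_ball_forces Hl) as [e [He Hforce]].
  exists e. split; [exact He |]. intros g Hg.
  apply (Hup h g (Hup k h HUk Hkh)). exact (step_fun_le poY Hh (Hforce g Hg)).
Qed.

Lemma p_theta_diff_le (f g h : F) N delta :
  0 <= delta -> (forall n, (n < N)%nat -> pdist_at h f n <= pdist_at g f n + delta) ->
  P h f - P g f <= (delta + theta ^ N) * (theta / (1 - theta)).
Proof.
  intros Hdelta Hhead. rewrite !p_theta_wsum, <- wsum_minus by apply wsummable_pdist_at.
  apply (wsum_le_head_tail theta_bounds);
    [apply wsummable_minus; apply wsummable_pdist_at | exact Hdelta | |].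
  - intros n. unfold pdist_at. pose proof (pY_le1 (fv h (a n)) (fv f (a n))).
    pose proof (pm_nonneg pmY (fv g (a n)) (fv f (a n))). lra.
  - intros n Hn. specialize (Hhead n Hn). lra.
Qed.

Lemma p_theta_ball_way_below (f g : F) e :
  P g f < P f f + e -> exists h, way_below cle h g /\ P h f < P f f + e.
Proof.
  intros Hg. set (eta := P f f + e - P g f).
  assert (Heta : 0 < eta) by (unfold eta; lra).
  (* chosen so that [2 * delta * (theta / (1 - theta)) = eta * theta < eta] *)
  set (delta := eta * (1 - theta) / 2).
  assert (Hdelta : 0 < delta)
    by (unfold delta; apply Rdiv_lt_0_compat; [apply Rmult_lt_0_compat |]; lra).
  destruct (pow_lt_1_zero theta ltac:(rewrite Rabs_right; lra) delta Hdelta) as [N HN].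
  specialize (HN N (le_n N)).
  rewrite Rabs_right in HN by (left; apply (theta_pow_pos theta_bounds)).
  set (O n y := pY y (fv f (a n)) < pY (fv g (a n)) (fv f (a n)) + delta).
  assert (HO : forall n, scott_open leY (O n))
    by (intros n; apply (proj2 qY), (pm_open_ball pmY)).
  destruct (approx_list_meeting_opens poX poY algX algY (g := g) (x := a) N HO)
    as [l [Hl Hcover]]; [intros n; unfold O; lra |].
  destruct (exists_step_fun poX poY bcY Hl) as [h Hh].
  exists h. split; [exact (step_fun_way_below poY dcpoY Hl Hh) |].
  assert (Hclose : P h f - P g f <= (delta + theta ^ N) * (theta / (1 - theta))).
  { apply p_theta_diff_le; [lra |]. intros n Hn.
    destruct (Hcover n Hn) as [b [c [Hin [Hb HOc]]]].
    pose proof (quantified_antitone qY (fv f (a n)) (step_fun_ge Hh Hin Hb)).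
    unfold pdist_at, O in *. lra. }
  assert (Hw : 0 < theta / (1 - theta)) by (apply Rdiv_lt_0_compat; lra).
  assert ((delta + theta ^ N) * (theta / (1 - theta)) < eta * theta).
  { apply Rlt_le_trans with (2 * delta * (theta / (1 - theta))).
    - apply Rmult_lt_compat_r; lra.
    - right. unfold delta. field. lra. }
  assert (eta * theta < eta) by nra.
  unfold eta in *. lra.
Qed.

Lemma p_theta_quantified : quantified cle P.
Proof.
  split; [exact p_theta_partial_metric |]. intros U. split.
  - intros HU. apply (pm_open_of_nbhd (p := P)). intros f Hf.
    exact (scott_open_p_theta_nbhd HU Hf).
  - intros [I [_ HU]]. split.
    + intros f g Hf Hfg. destruct (proj1 (HU f) Hf) as [c [Hc Hball]].
      apply HU. exists c. split; [exact Hc |]. unfold pball in *.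
      pose proof (p_theta_antitone (fst c) Hfg). lra.
    + intros f Hf. destruct (proj1 (HU f) Hf) as [c [Hc Hball]].
      destruct (p_theta_ball_way_below Hball) as [h [Hhf Hh]].
      exists h. split; [exact Hhf |]. apply HU. exists c. auto.
Qed.
End Quantification.

Theorem mainTheorem7 (X Y : Type) (leX : X -> X -> Prop) (leY : Y -> Y -> Prop)
  (pX : X -> X -> R) (pY : Y -> Y -> R) (B : X -> Prop) (a : nat -> X) :
  scott_domain leX -> scott_domain leY ->
  quantified leX pX -> quantified leY pY ->
  (forall x x', 0 <= pX x x' <= 1) -> (forall y y', 0 <= pY y y' <= 1) ->
  is_basis leX B -> countable_set B ->
  (forall n, B (a n)) -> (forall b, B b -> exists n, a n = b) ->
  forall theta : R, 0 < theta <= 1 / 2 ->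
  quantified (@cfun_le X Y leX leY) (@p_theta X Y leX leY pY a theta).
Proof.
  (* Neither [pX] nor the countability of [B] plays a role. *)
  intros [[poX _] [[KX [_ [HKXc HKX]]] _]] [[poY dcpoY] [[KY [_ [HKYc HKY]]] bcY]]
    _ qY _ HpY HB _ _ Ha_onto theta Htheta.
  rewrite (compact_basis_eq poX HKXc HKX) in HKX.
  rewrite (compact_basis_eq poY HKYc HKY) in HKY.
  apply p_theta_quantified; try assumption.
  - intros y y'. apply HpY.
  - intros b Hb. exact (Ha_onto b (compact_in_basis poX HB Hb)).
  - lra.
Qed.
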